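(* Let $q\in(0,1/2)$ and $\gamma\in[0,1]$. If $q''>q$ (intermittent selfish mining is more profitable than honest mining), then $q''<q'$ (selfish mining is more profitable than intermittent selfish mining).
   Context: Here $p=1-q$, and $$\delta=\frac{(1+pq)(p-q)+pq}{p^2q+p-q},\qquad q'=\frac{((1+pq)(p-q)+pq)q-(1-\gamma)p^2q(p-q)}{p^2q+p-q},\qquad q''=\frac{q+q'}{\delta+1/\delta}.$$ These are respectively the mean difficulty parameter, the apparent hashrate of selfish mining, and the apparent hashrate of intermittent selfish mining. A strategy is more profitable than another when its apparent hashrate (long-run revenue ratio divided by $b/\tau_0$) is larger. Honest mining has apparent hashrate $q$. *)

From Stdlib Require Import Reals.
Open Scope R_scope.

Definition pp (q : R) : R := 1 - q.

Definition delta (q : R) : R :=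
  let p := pp q in
  ((1 + p*q)*(p - q) + p*q) / (p^2*q + p - q).

(* apparent hashrate of selfish mining q' *)
Definition q1 (q gamma : R) : R :=
  let p := pp q in
  (((1 + p*q)*(p - q) + p*q)*q - (1 - gamma)*p^2*q*(p - q)) / (p^2*q + p - q).

(* apparent hashrate of intermittent selfish mining q'' *)
Definition q2 (q gamma : R) : R :=
  (q + q1 q gamma) / (delta q + / delta q).

From Stdlib Require Import Reals Lra Psatz.
Open Scope R_scope.

(* The apparent hashrate of intermittent selfish mining is
   q'' = (q + q') / s with s = delta + 1/delta.  For q in (0, 1/2) the mean
   difficulty parameter delta is positive, so by AM-GM s >= 2.  An average of
   the form (a + x)/s with s >= 2 and a >= 0 can only exceed a if x exceeds it
   as well: from (a + x)/s > a we get x > (s - 1) a >= a, hence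
   s x >= 2 x > a + x.  Applied with a = q and x = q' this is exactly the
   statement: if q'' > q then q'' < q'. *)

(* For q in (0, 1/2) both numerator and denominator of delta are positive. *)
Lemma delta_pos (q : R) : 0 < q < 1/2 -> 0 < delta q.
Proof.
  intros [hq0 hq1]. unfold delta, pp.
  apply Rdiv_lt_0_compat; nra.
Qed.

Lemma add_inv_ge_2 (d : R) : 0 < d -> 2 <= d + / d.
Proof.
  intros hd.
  assert (hinv : d * / d = 1) by (apply Rinv_r; lra).
  pose proof (Rle_0_sqr (d - 1)) as hsq; unfold Rsqr in hsq.
  apply (Rmult_le_reg_l d); [exact hd|].
  rewrite Rmult_plus_distr_l, hinv. nra.
Qed.

Lemma scaled_mean_below (a x s : R) :
  0 <= a -> 2 <= s -> (a + x) / s > a -> (a + x) / s < x.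
Proof.
  intros ha hs habove.
  assert (hs0 : 0 < s) by lra.
  assert (hcancel : (a + x) / s * s = a + x) by (field; lra).
  assert (hsum : a * s < a + x).
  { rewrite <- hcancel. apply Rmult_lt_compat_r; lra. }
  assert (hxa : a < x) by nra.
  apply (Rmult_lt_reg_r s); [exact hs0|].
  rewrite hcancel. nra.
Qed.

Theorem mainTheorem9 (q gamma : R) :
  0 < q < 1/2 -> 0 <= gamma <= 1 ->
  q2 q gamma > q -> q2 q gamma < q1 q gamma.
Proof.
  intros hq _ habove.
  unfold q2 in *.
  apply scaled_mean_below; [lra| |exact habove].
  exact (add_inv_ge_2 (delta q) (delta_pos q hq)).
Qed.
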